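(* Let $F$ be a $4$-regular graph and let $P$ be a circuit partition of $F$. For each cycle $C$ of $F$, there is a cycle $C'$ of $F$ that traverses the same set of edges as $C$ such that $\pi_P(C')$ is a cycle of $\mathrm{Tch}(P)$.
   Context: Graphs: $G=(V,H,E,\epsilon)$ with finite sets of vertices $V$ and half-edges $H$, a partition $E$ of $H$ into unordered pairs (edges), and $\epsilon:H\to V$; loops and multiple edges allowed. A single transition is an unordered pair of distinct half-edges incident with a common vertex; a directed single transition is such an ordered pair. A closed walk is a sequence $((h_1,h_2),\dots,(h_{n-1},h_n))$ of directed single transitions with $\{h_2,h_3\},\{h_4,h_5\},\dots,\{h_n,h_1\}$ edges, up to cyclic shift; it traverses an edge if the edge's half-edges occur in it. An oriented circuit is a nonempty closed walk in which each half-edge occurs at most once; an oriented cycle is a set of oriented circuits such that each edge is traversed by at most one of them. Circuits and cycles are the same notions with orientation forgotten (each directed single transition replaced by the corresponding single transition). $F$ is $4$-regular if every vertex is incident with exactly $4$ half-edges. A transition at $v$ is a partition of the four half-edges at $v$ into two single transitions. A circuit partition $P$ is a set of circuits of $F$ such that every half-edge lies in exactly one single transition of exactly one circuit of $P$; $\tau(P)$ is the set of transitions both of whose single transitions occur in circuits of $P$. The touch-graph $\mathrm{Tch}(P)$ has vertex set $P$, half-edge set the set of single transitions occurring in circuits of $P$, edge set $\tau(P)$, and maps each single transition to the circuit containing it. For a closed walk $W$ of $F$, $\pi_P(W)$ is obtained by replacing each directed single transition $(h,h')$ of $W$ by $(s,s')$, where $s,s'$ are the single transitions of circuits of $P$ containing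 $h,h'$, and deleting pairs with $s=s'$; it is a closed walk of $\mathrm{Tch}(P)$ in which each remaining $(s,s')$ traverses edge $\{s,s'\}$ from half-edge $s$ to half-edge $s'$. This is applied to unoriented circuits by forgetting orientations, and to cycles elementwise. *)

From mathcomp Require Import all_boot.
Set Implicit Arguments. Unset Strict Implicit. Unset Printing Implicit Defensive.

(* A graph (V, H, E, eps): finite vertices and half-edges; the partition E of
   H into unordered pairs is given by the fixed-point-free involution [gpart]
   (h and gpart h form an edge); [gend] is eps. Loops/multi-edges allowed. *)
Record graph := Graph {
  gV : finType;
  gH : finType;
  gpart : gH -> gH;
  gend : gH -> gV }.

Definition wf_graph (G : graph) : Prop :=
  forall h : gH G, gpart (gpart h) = h /\ gpart h <> h.

Definition four_regular (G : graph) : Prop :=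
  forall v : gV G, #|[set h : gH G | gend h == v]| = 4.

Section Walks.
Variable G : graph.
Local Notation H := (gH G).

(* A closed walk is a seq of directed single transitions (h1,h2),(h3,h4),...
   with {h2,h3},...,{hn,h1} edges; considered up to cyclic shift (all
   predicates below are invariant under rotation). *)
Definition dir_single_transition (p : H * H) : bool :=
  (p.1 != p.2) && (gend p.1 == gend p.2).

Definition closed_walk (W : seq (H * H)) : bool :=
  all dir_single_transition W &&
  all (fun pq : (H * H) * (H * H) => gpart pq.1.2 == pq.2.1) (zip W (rot 1 W)).

Definition walk_halves (W : seq (H * H)) : seq H :=
  flatten [seq [:: p.1; p.2] | p <- W].

Definition walk_edges (W : seq (H * H)) : {set {set H}} :=
  [set [set h; gpart h] | h in walk_halves W].

Definition oriented_circuit (W : seq (H * H)) : bool :=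
  [&& closed_walk W, W != [::] & uniq (walk_halves W)].

Definition oriented_cycle (C : seq (seq (H * H))) : bool :=
  all oriented_circuit C &&
  pairwise (fun W1 W2 => [disjoint walk_edges W1 & walk_edges W2]) C.

Definition cycle_edges (C : seq (seq (H * H))) : {set {set H}} :=
  \bigcup_(W <- C) walk_edges W.

End Walks.

Section TouchGraph.
Variable F : graph.
Local Notation H := (gH F).
Variable P : seq (seq (H * H)).

Definition circuit_partition : Prop :=
  all (oriented_circuit (G := F)) P /\
  forall h : H,
    \sum_(W <- P) count (fun p : H * H => (p.1 == h) || (p.2 == h)) W = 1%N.

Definition sset (p : H * H) : {set H} := [set p.1; p.2].

Definition STP : seq {set H} := [seq sset p | p <- flatten P].

(* half-edges of Tch(P) *)
Definition TH : finType := {s : {set H} | s \in STP}.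

Definition cidx (s : {set H}) : nat :=
  find (fun W => s \in [seq sset p | p <- W]) P.

Lemma cidx_lt (s : {set H}) : s \in STP -> cidx s < size P.
Proof.
rewrite /STP => /mapP [p /flattenP [W WP pW] ->].
rewrite /cidx -has_find; apply/hasP; exists W => //.
by apply/mapP; exists p.
Qed.

(* eps of Tch(P): the circuit of P (indexed by its position) containing s *)
Definition tch_end (s : TH) : 'I_(size P) := Ordinal (cidx_lt (valP s)).

Definition is_transition (s t : {set H}) : bool :=
  [disjoint s & t] && [exists v, s :|: t == [set h | gend h == v]].

(* the edge partner of s in Tch(P): edges of Tch(P) are tau(P) *)
Definition tch_part (s : TH) : TH :=
  odflt s [pick t : TH | is_transition (val s) (val t)].

Definition Tch : graph := Graph tch_part tch_end.

Definition st_of (h : H) : option TH := [pick s : TH | h \in val s].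

(* remaining pairs (s, s') of pi_P(W), each traversing edge {s,s'} of Tch *)
Definition pi_pairs (W : seq (H * H)) : seq (TH * TH) :=
  pmap (fun p : H * H =>
          match st_of p.1, st_of p.2 with
          | Some s, Some s' => if s != s' then Some (s, s') else None
          | _, _ => None
          end) W.

(* pi_P(W) as a closed walk of Tch(P), in the directed-single-transition
   format: [(s1',s2); (s2',s3); ...; (sk',s1)] *)
Definition piP (W : seq (H * H)) : seq (TH * TH) :=
  [seq (ab.1.2, ab.2.1) | ab <- zip (pi_pairs W) (rot 1 (pi_pairs W))].

(* pi_P applied elementwise to a cycle; empty images are discarded *)
Definition piP_cycle (C : seq (seq (H * H))) : seq (seq (TH * TH)) :=
  [seq piP W | W <- C & piP W != [::]].

End TouchGraph.

From Pilot Require Import Defs.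
From mathcomp Require Import all_boot.
Set Implicit Arguments. Unset Strict Implicit. Unset Printing Implicit Defensive.

(* The cycle C' is obtained from C by re-choosing the transition used at each
   half-edge h of C: C' follows the transition of P at h whenever the P-mate of h
   lies on C, and keeps the transition of C otherwise (a "crossing").  Because F
   is 4-regular, C visits a vertex with a crossing only once, so C' crosses P at
   most once per vertex, and C' still traverses exactly the edges of C.  Under
   pi_P the steps of C' along transitions of P vanish, while a crossing at v
   becomes the traversal of the edge of Tch(P) given by the P-transition at v;
   hence every edge of Tch(P) is traversed at most once by the images of the
   circuits of C'. *)

Lemma all_zip_rot1 (A : Type) (e : rel A) (s : seq A) :
  all (fun ab => e ab.1 ab.2) (zip s (rot 1 s)) = cycle e s.
Proof.
case: s => [|x p] //; rewrite rot1_cons /=.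
suff: forall u, all (fun ab => e ab.1 ab.2) (zip (x :: p) (rcons p u)) =
                path e x (rcons p u) by apply.
by elim: p x => [|y p IH] x u //=; rewrite IH.
Qed.

Lemma count_eq1_eq (A : eqType) (a : pred A) s x y :
  count a s = 1 -> x \in s -> y \in s -> a x -> a y -> x = y.
Proof.
move=> a1 xs ys ax ay; have: x \in filter a s by rewrite mem_filter ax.
have: y \in filter a s by rewrite mem_filter ay.
move: a1; rewrite -size_filter; case: (filter a s) => [|z [|]] //= _.
by rewrite !inE => /eqP-> /eqP->.
Qed.

Lemma pairwise_uniq_in (A : eqType) (e : rel A) s : uniq s ->
  {in s &, forall x y, x != y -> e x y} -> pairwise e s.
Proof. by rewrite uniq_pairwise => us exy; apply: sub_in_pairwise exy s (allss s) us. Qed.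

Section FilterCycle.
Variables (A B : eqType) (p : pred A) (inn out : A -> B).
Local Notation link := (fun a b => out a == inn b).
Local Notation transparent := (fun a => p a || (inn a == out a)).

Lemma path_filter_transparent x s : path link x s -> all transparent s ->
  p (last x s) -> path link x (filter p s).
Proof.
elim: s x => [|a s IH] x //= /andP[xa pas] /andP[ta ts] ps.
case: ifP => pa /=; first by rewrite xa IH.
move: ta; rewrite pa /= => /eqP ta.
have := IH a pas ts ps; case: (filter p s) => [|b l] //= /andP[ab ->].
by rewrite (eqP xa) ta ab.
Qed.

Lemma cycle_filter_transparent s : cycle link s -> all transparent s ->
  cycle link (filter p s).
Proof.
have [/hasP[x xs px] | nops] := boolP (has p s); last first.
  by move: nops; rewrite has_filter negbK => /eqP->.
case: (rot_to xs) => i s' rot_s.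
have filter_rot : filter p (rot i s) = rot (size (filter p (take i s))) (filter p s).
  by rewrite {1}/rot filter_cat -rot_size_cat -filter_cat cat_take_drop.
move=> cyc ts; rewrite -(rot_cycle (size (filter p (take i s)))) -filter_rot rot_s /= px /=.
have: all transparent (rot i s) by apply/allP => a; rewrite mem_rot; exact: (allP ts).
move: cyc; rewrite -(rot_cycle i) rot_s /= => cyc /andP[_ {}ts].
have -> : rcons (filter p s') x = filter p (rcons s' x) by rewrite filter_rcons px.
by apply: path_filter_transparent => //; rewrite ?all_rcons ?last_rcons ?px ?ts.
Qed.

End FilterCycle.

Lemma uniq_flatten_pairs (A B : eqType) (a b : A -> B) s : uniq s ->
  {in s, forall y, a y != b y} ->
  {in s &, forall y z,
     [|| a y == a z, a y == b z, b y == a z | b y == b z] -> y = z} ->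
  uniq (flatten [seq [:: a y; b y] | y <- s]).
Proof.
elim: s => //= y s IH /andP[ys us] ne meet.
have memf x : x \in flatten [seq [:: a y; b y] | y <- s] ->
   exists2 z, z \in s & (x == a z) || (x == b z).
  by case/flattenP => _ /mapP[z zs ->]; rewrite !inE; exists z.
have away z : z \in s -> [|| a y == a z, a y == b z, b y == a z | b y == b z] -> False.
  move=> zs /(meet y z); rewrite mem_head inE zs orbT => /(_ isT isT) yz.
  by rewrite yz zs in ys.
rewrite !inE negb_or ne ?mem_head //= IH //; first last.
- by move=> u v us' vs; apply: meet; rewrite inE ?us' ?vs orbT.
- by move=> u us'; apply: ne; rewrite inE us' orbT.
by rewrite andbT; apply/andP; split; apply/negP => /memf[z zs /orP[]/eqP Ez];
  apply: (away z zs); rewrite Ez eqxx ?orbT.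
Qed.

Definition inpair (A : eqType) (h : A) (p : A * A) := (h == p.1) || (h == p.2).

Definition link_pairs (A : Type) (T : seq (A * A)) : seq (A * A) :=
  [seq (ab.1.2, ab.2.1) | ab <- zip T (rot 1 T)].

Lemma all_link_pairs (A : Type) (e : rel A) (T : seq (A * A)) :
  all (fun q => e q.1 q.2) (link_pairs T) = cycle (fun a b => e a.2 b.1) T.
Proof. by rewrite all_map; apply: all_zip_rot1. Qed.

Section Walks.
Variable G : graph.
Local Notation H := (gH G).
Implicit Types (W T : seq (H * H)) (h : H).

Lemma closed_walkE W : closed_walk W =
  all (@dir_single_transition G) W && cycle (fun a b => gpart a.2 == b.1) W.
Proof. by rewrite /closed_walk (all_zip_rot1 (fun a b => gpart a.2 == b.1)). Qed.

Lemma walk_halves_cons p W : walk_halves (p :: W) = p.1 :: p.2 :: walk_halves W.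
Proof. by []. Qed.

Lemma mem_walk_halves W h : (h \in walk_halves W) = has (inpair h) W.
Proof. by elim: W => //= p W IH; rewrite walk_halves_cons !inE IH orbA. Qed.

Lemma walk_halves_cat W1 W2 :
  walk_halves (W1 ++ W2) = walk_halves W1 ++ walk_halves W2.
Proof. by rewrite /walk_halves map_cat flatten_cat. Qed.

Lemma mem_walk_halves_flatten (C : seq (seq (H * H))) h :
  (h \in walk_halves (flatten C)) = has (fun W => h \in walk_halves W) C.
Proof. by elim: C => //= W C IH; rewrite walk_halves_cat mem_cat IH. Qed.

Lemma closed_walk_gpart W h : involutive (@gpart G) ->
  closed_walk W -> h \in walk_halves W -> gpart h \in walk_halves W.
Proof.
move=> gpartK; rewrite closed_walkE => /andP[_ cyc].
rewrite !mem_walk_halves => /hasP[p pW /orP[]/eqP->].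
- apply/hasP; exists (prev W p); first by rewrite mem_prev.
  by rewrite /inpair -(eqP (prev_cycle cyc pW)) gpartK eqxx orbT.
- apply/hasP; exists (next W p); first by rewrite mem_next.
  by rewrite /inpair (eqP (next_cycle cyc pW)) eqxx.
Qed.

Lemma uniq_walk_halves_inj W h p q : uniq (walk_halves W) ->
  p \in W -> q \in W -> inpair h p -> inpair h q -> p = q.
Proof.
elim: W => // a W IH.
rewrite walk_halves_cons /= !inE negb_or => /andP[/andP[_ a1W] /andP[a2W uW]].
have notW r : r \in W -> inpair h r -> ~~ inpair h a.
  move=> rW hr; have hW : h \in walk_halves W by rewrite mem_walk_halves; apply/hasP; exists r.
  by apply/negP => /orP[]/eqP ha; rewrite -ha hW in a1W a2W.
case/orP => [/eqP->|pW]; case/orP => [/eqP->|qW] // hp hq.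
- by rewrite hp in notW; case/negP: (notW q qW hq).
- by rewrite hq in notW; case/negP: (notW p pW hp).
- exact: IH.
Qed.

Lemma uniq_walk_halves_neq W : uniq (walk_halves W) -> all (fun p => p.1 != p.2) W.
Proof.
elim: W => // p W IH; rewrite walk_halves_cons /= inE negb_or.
by case/andP=> /andP[-> _] /andP[_ /IH].
Qed.

Lemma walk_halves_link_pairs T : walk_halves (link_pairs T) = rot 1 (walk_halves T).
Proof.
case: T => [|t T] //; rewrite /link_pairs rot1_cons walk_halves_cons rot1_cons.
suff -> : forall t' u, walk_halves [seq (ab.1.2, ab.2.1) | ab <- zip (t' :: T) (rcons T u)] =
  t'.2 :: rcons (walk_halves T) u.1 by [].
elim: T => [|x T IH] t' u //.
by rewrite /= walk_halves_cons IH.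
Qed.

Lemma cycle_link_pairs T : all (fun b => gpart b.1 == b.2) T ->
  cycle (fun a b => gpart a.2 == b.1) (link_pairs T).
Proof.
case: T => [|t T] //= /andP[gt gT]; rewrite /link_pairs rot1_cons.
have links q t' T' :
   (last q [seq (ab.1.2, ab.2.1) | ab <- zip (t' :: T') (rcons T' t)]).2 = t.1 /\
   (all (fun b => gpart b.1 == b.2) T' -> gpart q.2 == t'.2 ->
    path (fun a b => gpart a.2 == b.1) q
      [seq (ab.1.2, ab.2.1) | ab <- zip (t' :: T') (rcons T' t)]).
  elim: T' q t' => [|x T' IH] q t' /=; first by split=> // _ ->.
  by have [-> IHp] := IH (t'.2, x.1) x; split=> // /andP[gx gT'] ->; apply: IHp.
rewrite (cycle_path t); set L := map _ _.
have [last_t _] := links t t T; have [_ pL] := links (last t L) t T.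
by apply: pL; rewrite ?last_t.
Qed.

Lemma oriented_circuit_link_pairs T : T != [::] -> uniq (walk_halves T) ->
  all (fun b => gpart b.1 == b.2) T -> cycle (fun a b => gend a.2 == gend b.1) T ->
  oriented_circuit (link_pairs T).
Proof.
move=> T0 uT gT endT; have uL : uniq (walk_halves (link_pairs T)).
  by rewrite walk_halves_link_pairs rot_uniq.
rewrite /oriented_circuit closed_walkE cycle_link_pairs // uL andbT.
rewrite -size_eq0 size_map size_zip size_rot minnn size_eq0 T0 andbT.
rewrite /dir_single_transition all_predI uniq_walk_halves_neq //=.
by rewrite andbT (all_link_pairs (fun a b => gend a == gend b)).
Qed.

Lemma mem_cycle_edges (C : seq (seq (H * H))) E :
  reflect (exists2 h, h \in walk_halves (flatten C) & E = [set h; gpart h])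
          (E \in cycle_edges C).
Proof.
rewrite /cycle_edges; elim: C => [|W C IH]; first by rewrite big_nil inE; right; case.
rewrite big_cons in_setU /= walk_halves_cat; apply: (iffP orP) => [[]|[h]].
- by case/imsetP => h hW ->; exists h; rewrite // mem_cat hW.
- by move/IH => -[h hC ->]; exists h; rewrite // mem_cat hC orbT.
- rewrite mem_cat => /orP[hW | hC] Eh; first by left; rewrite Eh; apply: imset_f.
  by right; apply/IH; exists h.
Qed.

End Walks.

Section Partner.
Variables (G : graph) (D : seq (gH G * gH G)).
Local Notation H := (gH G).
Hypothesis D_dst : all (@dir_single_transition G) D.
Hypothesis D_inj : forall (h : H) p q, p \in D -> q \in D -> inpair h p -> inpair h q -> p = q.

Definition partner (h : H) := odflt h [pick h' | ((h, h') \in D) || ((h', h) \in D)].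

Lemma partner_cases h p : p \in D -> inpair h p -> p = (h, partner h) \/ p = (partner h, h).
Proof.
move=> pD hp; rewrite /partner; case: pickP => [h' /= /orP[] h'D | none].
- by left; apply: D_inj pD h'D hp _; rewrite /inpair eqxx.
- by right; apply: D_inj pD h'D hp _; rewrite /inpair eqxx orbT.
- case/orP: hp => /eqP hp; [have := none p.2 | have := none p.1];
  by rewrite /= hp -surjective_pairing pD ?orbT.
Qed.

Variable h : H.
Hypothesis hD : has (inpair h) D.

Lemma exists_partner_pair : exists2 p, p \in D & p = (h, partner h) \/ p = (partner h, h).
Proof. by have /hasP[p pD hp] := hD; exists p => //; apply: partner_cases. Qed.

Lemma partner_neq : partner h != h.
Proof.
have [p pD Ep] := exists_partner_pair; have /andP[+ _] := allP D_dst p pD.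
by case: Ep => ->; rewrite // eq_sym.
Qed.

Lemma partner_end : gend (partner h) = gend h.
Proof.
have [p pD Ep] := exists_partner_pair; have /andP[_ /eqP] := allP D_dst p pD.
by case: Ep => ->.
Qed.

Lemma has_partner : has (inpair (partner h)) D.
Proof.
have [p pD Ep] := exists_partner_pair; apply/hasP; exists p => //.
by case: Ep => ->; rewrite /inpair eqxx ?orbT.
Qed.

Lemma partnerK : partner (partner h) = h.
Proof.
have [p pD Ep] := exists_partner_pair; have pp : inpair (partner h) p.
  by case: Ep => ->; rewrite /inpair eqxx ?orbT.
have /eqP ne := partner_neq.
by case: (partner_cases pD pp); case: Ep => -> [] *; congruence.
Qed.

End Partner.

Section Vertex.
Variable G : graph.
Hypothesis regG : four_regular G.

Lemma at_vertex_quad (a b c d x : gH G) : uniq [:: a; b; c; d] ->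
  all (fun h => gend h == gend a) [:: b; c; d] ->
  (gend x == gend a) = (x \in [:: a; b; c; d]).
Proof.
move=> abcd ends; have card : #|[:: a; b; c; d]| = #|[set h | gend h == gend a]|.
  by rewrite regG (card_uniqP abcd).
have /(subset_cardP card) same : [:: a; b; c; d] \subset [set h | gend h == gend a].
  apply/subsetP => y; rewrite inE; move: ends => /= /and4P[eb ec ed _].
  by rewrite !inE => /or4P[] /eqP->.
by rewrite same inE.
Qed.

End Vertex.

Section Transitions.
Variable F : graph.
Local Notation H := (gH F).
Local Notation g := (@gpart F).
Hypothesis wfF : wf_graph F.
Hypothesis regF : four_regular F.

Lemma gpartK : involutive g. Proof. by move=> h; case: (wfF h). Qed.
Lemma gpart_neq (h : H) : g h != h. Proof. by case: (wfF h) => _ /eqP. Qed.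

Variable P : seq (seq (H * H)).
Hypothesis cpP : circuit_partition P.
Local Notation Ptrans := (flatten P).

Lemma Ptrans_dst : all (@dir_single_transition F) Ptrans.
Proof.
apply/allP => p /flattenP[W WP pW]; have /and3P[+ _ _] := allP cpP.1 W WP.
by rewrite closed_walkE => /andP[/allP-> //].
Qed.

Lemma Ptrans_count h : count (inpair h) Ptrans = 1.
Proof.
rewrite count_flatten sumnE big_map -(cpP.2 h); apply: eq_bigr => W _.
by apply: eq_count => p; rewrite /inpair !(eq_sym h).
Qed.

Lemma Ptrans_inj h p q : p \in Ptrans -> q \in Ptrans -> inpair h p -> inpair h q -> p = q.
Proof. exact: count_eq1_eq (Ptrans_count h). Qed.

Lemma Ptrans_has h : has (inpair h) Ptrans.
Proof. by rewrite has_count Ptrans_count. Qed.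

Definition pmate := partner Ptrans.

Lemma pmate_neq h : pmate h != h.
Proof. exact: (partner_neq Ptrans_dst (@Ptrans_inj) (Ptrans_has h)). Qed.
Lemma pmate_end h : gend (pmate h) = gend h.
Proof. exact: (partner_end Ptrans_dst (@Ptrans_inj) (Ptrans_has h)). Qed.
Lemma pmateK : involutive pmate.
Proof. by move=> h; apply: (partnerK Ptrans_dst (@Ptrans_inj) (Ptrans_has h)). Qed.
Lemma pmate_inj : injective pmate. Proof. exact: inv_inj pmateK. Qed.

Lemma mem_sset (h : H) p : (h \in sset p) = inpair h p.
Proof. by rewrite !inE. Qed.

Lemma sset_Ptrans h p : p \in Ptrans -> inpair h p -> sset p = [set h; pmate h].
Proof. by move=> pD /(partner_cases (@Ptrans_inj) pD) [] ->; rewrite /sset // setUC. Qed.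

Lemma st_mem h : [set h; pmate h] \in STP P.
Proof.
have /hasP[p pD hp] := Ptrans_has h.
by apply/mapP; exists p; rewrite // (sset_Ptrans pD hp).
Qed.

Definition st h : TH P := Sub [set h; pmate h] (st_mem h).

Lemma mem_st h : h \in val (st h).
Proof. by rewrite !inE eqxx. Qed.

Lemma stE (s : TH P) h : h \in val s -> s = st h.
Proof.
have /mapP[p pD Es] := valP s; rewrite Es mem_sset => hp.
by apply: val_inj; rewrite /= Es (sset_Ptrans pD hp).
Qed.

Lemma st_eqE y z : (st z == st y) = (z \in [set y; pmate y]).
Proof.
apply/eqP/idP => [E | zy]; last by rewrite [st y](@stE _ z).
by have := mem_st z; rewrite E.
Qed.

Lemma st_surj (s : TH P) : exists h, s = st h.
Proof. by have /mapP[p _ Es] := valP s; exists p.1; apply: stE; rewrite Es !inE eqxx. Qed.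

Lemma st_pmate h : st (pmate h) = st h.
Proof. by apply/eqP; rewrite st_eqE !inE eqxx orbT. Qed.

Lemma st_of_st h : st_of P h = Some (st h).
Proof.
rewrite /st_of; case: pickP => [s hs | none]; first by rewrite (stE hs).
by have := none (st h); rewrite mem_st.
Qed.

Lemma cidx_st h : cidx P (val (st h)) = find (fun W => h \in walk_halves W) P.
Proof.
rewrite /cidx; apply: eq_in_find => W WP /=; rewrite mem_walk_halves.
apply/mapP/hasP => [[q qW Eq] | [q qW hq]].
  by exists q; rewrite // -mem_sset -Eq !inE eqxx.
by exists q; rewrite // (sset_Ptrans _ hq) //; apply/flattenP; exists W.
Qed.

Lemma tch_end_st_gpart h : tch_end (st (g h)) = tch_end (st h).
Proof.
apply: val_inj; rewrite /= !cidx_st; apply: eq_in_find => W WP.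
have /and3P[cW _ _] := allP cpP.1 W WP.
by apply/idP/idP => /(closed_walk_gpart gpartK cW); rewrite ?gpartK.
Qed.

Lemma tch_partE (s t : TH P) : is_transition (val s) (val t) ->
  (forall t', is_transition (val s) (val t') -> t' = t) -> tch_part s = t.
Proof.
move=> st uniq_t; rewrite /tch_part.
by case: pickP => [t' /uniq_t -> | /(_ t)]; rewrite ?st.
Qed.

Lemma is_transition_quad (a b c d : H) : uniq [:: a; b; c; d] ->
  all (fun h => gend h == gend a) [:: b; c; d] -> is_transition [set a; b] [set c; d].
Proof.
move=> abcd ends; apply/andP; split.
  apply/pred0P => x /=; rewrite !inE; apply/negP => /andP[/orP[]/eqP-> /orP[]/eqP E];
  by move: abcd; rewrite /= !inE E eqxx ?orbT ?andbF.
apply/existsP; exists (gend a); apply/eqP/setP => x.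
by rewrite !inE (at_vertex_quad regF x abcd ends) !inE !orbA.
Qed.

Variable C : seq (seq (H * H)).
Hypothesis cycC : oriented_cycle C.
Local Notation Ctrans := (flatten C).

Lemma circuit_of_cycle W : W \in C -> oriented_circuit W.
Proof. by move=> WC; case/andP: cycC => /allP/(_ W WC). Qed.

Lemma Ctrans_uniq : uniq (walk_halves Ctrans).
Proof.
case/andP: cycC; elim: C => //= W C' IH /andP[cW cC'] /andP[dW pC'].
rewrite walk_halves_cat cat_uniq IH // andbT; case/and3P: cW => _ _ -> /=.
apply/hasP => -[h]; rewrite mem_walk_halves_flatten => /hasP[W' W'C hW'] hW.
have := allP dW W' W'C; rewrite disjoint_subset => /subsetP/(_ [set h; g h]).
by rewrite !inE => /(_ (imset_f _ hW)) /negP; apply; apply: imset_f.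
Qed.

Lemma Ctrans_dst : all (@dir_single_transition F) Ctrans.
Proof.
apply/allP => p /flattenP[W WC pW]; have /and3P[+ _ _] := circuit_of_cycle WC.
by rewrite closed_walkE => /andP[/allP-> //].
Qed.

Lemma Ctrans_inj h p q : p \in Ctrans -> q \in Ctrans -> inpair h p -> inpair h q -> p = q.
Proof. exact: uniq_walk_halves_inj Ctrans_uniq. Qed.

Definition onC : {set H} := [set h | h \in walk_halves Ctrans].

Lemma onC_has h : (h \in onC) = has (inpair h) Ctrans.
Proof. by rewrite inE mem_walk_halves. Qed.

Lemma gpart_onC h : (g h \in onC) = (h \in onC).
Proof.
suff onC_g x : x \in onC -> g x \in onC by apply/idP/idP => /onC_g; rewrite ?gpartK.
rewrite !inE !mem_walk_halves_flatten => /hasP[W WC xW]; apply/hasP; exists W => //.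
by have /and3P[cW _ _] := circuit_of_cycle WC; apply: closed_walk_gpart gpartK cW xW.
Qed.

Definition cmate := partner Ctrans.

Section OnC.
Variable h : H.
Hypothesis hC : h \in onC.
Let hD : has (inpair h) Ctrans. Proof. by rewrite -onC_has. Qed.

Lemma cmate_neq : cmate h != h.
Proof. exact: (partner_neq Ctrans_dst (@Ctrans_inj) hD). Qed.

Lemma cmate_end : gend (cmate h) = gend h.
Proof. exact: (partner_end Ctrans_dst (@Ctrans_inj) hD). Qed.

Lemma cmateK : cmate (cmate h) = h.
Proof. exact: (partnerK Ctrans_dst (@Ctrans_inj) hD). Qed.

Lemma cmate_onC : cmate h \in onC.
Proof. by rewrite onC_has; exact: (has_partner (@Ctrans_inj) hD). Qed.

End OnC.

Definition crossing h := pmate h \notin onC.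

Definition mate h :=
  if h \in onC then (if pmate h \in onC then pmate h else cmate h) else h.

Lemma crossing_quad_uniq y : y \in onC -> crossing y ->
  uniq [:: y; pmate y; cmate y; pmate (cmate y)].
Proof.
move=> yC cy; have cC := cmate_onC yC.
have yP : y != pmate y by rewrite eq_sym pmate_neq.
have yc : y != cmate y by rewrite eq_sym cmate_neq.
have yPc : y != pmate (cmate y) by apply: contraNneq cy => ->; rewrite /crossing pmateK.
have Pc : pmate y != cmate y by apply: contraNneq cy => ->.
have PPc : pmate y != pmate (cmate y) by rewrite (inj_eq pmate_inj).
have cPc : cmate y != pmate (cmate y) by rewrite eq_sym pmate_neq.
by rewrite /= !inE !negb_or yP yc yPc Pc PPc cPc.
Qed.

Lemma crossing_quad_ends y : y \in onC ->
  all (fun h => gend h == gend y) [:: pmate y; cmate y; pmate (cmate y)].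
Proof. by move=> yC; rewrite /= !pmate_end cmate_end ?eqxx. Qed.

(* The four half-edges at the vertex of a crossing y are y, its C-mate, and
   their P-mates; the last one cannot lie on C, or its C-mate would be a fifth. *)
Lemma crossing_cmate y : y \in onC -> crossing y -> crossing (cmate y).
Proof.
move=> yC cy; have cC := cmate_onC yC; set c := cmate y in cC *.
apply/negP => pcC; have ecC := cmate_onC pcC.
have : cmate (pmate c) \in [:: y; pmate y; c; pmate c].
  rewrite -(at_vertex_quad regF _ (crossing_quad_uniq yC cy) (crossing_quad_ends yC)).
  by rewrite cmate_end // pmate_end cmate_end.
rewrite !inE => /or4P[] /eqP E.
- have : pmate c = cmate y by rewrite -E cmateK.
  by move/eqP; rewrite (negbTE (pmate_neq c)).
- by move: cy; rewrite /crossing -E ecC.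
- have : pmate c = y by rewrite -[pmate c](cmateK pcC) E cmateK.
  by move=> Ey; move: cy; rewrite /crossing -Ey pmateK cC.
- by move: (cmate_neq pcC); rewrite E eqxx.
Qed.

Lemma crossing_at_vertex y z : y \in onC -> crossing y -> z \in onC ->
  gend z = gend y -> z = y \/ z = cmate y.
Proof.
move=> yC cy zC /eqP.
rewrite (at_vertex_quad regF z (crossing_quad_uniq yC cy) (crossing_quad_ends yC)) !inE.
case/or4P => /eqP E; [by left | | by right | ].
- by move: cy; rewrite /crossing -E zC.
- by move: (crossing_cmate yC cy); rewrite /crossing -E zC.
Qed.

Lemma mate_onC h : (mate h \in onC) = (h \in onC).
Proof. by rewrite /mate; case: ifP => hC //; case: ifP => // _; apply: cmate_onC. Qed.

Lemma mate_neq h : h \in onC -> mate h != h.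
Proof. by move=> hC; rewrite /mate hC; case: ifP => _; rewrite ?pmate_neq ?cmate_neq. Qed.

Lemma mate_end h : gend (mate h) = gend h.
Proof. by rewrite /mate; case: ifP => hC //; case: ifP => _; rewrite ?pmate_end ?cmate_end. Qed.

Lemma mate_crossing y : y \in onC -> crossing y -> mate y = cmate y.
Proof. by rewrite /mate /crossing => -> /negbTE ->. Qed.

Lemma mate_pmate y : y \in onC -> ~~ crossing y -> mate y = pmate y.
Proof. by rewrite /mate /crossing negbK => -> ->. Qed.

Lemma mateK : involutive mate.
Proof.
move=> h; have [hC | hC] := boolP (h \in onC); last by rewrite /mate !(negbTE hC).
have [cy | ] := boolP (crossing h).
  by rewrite mate_crossing // mate_crossing ?cmateK ?cmate_onC ?crossing_cmate.
move=> ncy; have pC : pmate h \in onC by rewrite /crossing negbK in ncy.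
by rewrite mate_pmate // mate_pmate /crossing ?pmateK ?hC.
Qed.

Lemma mate_inj : injective mate. Proof. exact: inv_inj mateK. Qed.

Lemma crossing_mate y : y \in onC -> crossing y -> crossing (mate y).
Proof. by move=> yC cy; rewrite mate_crossing ?crossing_cmate. Qed.

Lemma st_mate y : y \in onC -> (st (mate y) == st y) = ~~ crossing y.
Proof.
move=> yC; rewrite st_eqE !inE (negbTE (mate_neq yC)) /=.
have [cy | ncy] := boolP (crossing y); last by rewrite mate_pmate ?eqxx.
rewrite mate_crossing //; apply/negP => /eqP E.
by move: cy; rewrite /crossing -E cmate_onC.
Qed.

Lemma tch_part_crossing y : y \in onC -> crossing y -> tch_part (st y) = st (mate y).
Proof.
move=> yC cy; rewrite mate_crossing //; set c := cmate y.
have quad := crossing_quad_uniq yC cy; have ends := crossing_quad_ends yC.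
apply: tch_partE => [|t]; first exact: is_transition_quad.
have [z ->] := st_surj t; rewrite /is_transition => /andP[dis /existsP[v /eqP Ev]].
have zv : z \in [set y; pmate y] :|: [set z; pmate z] by rewrite !inE eqxx !orbT.
have yv : y \in [set y; pmate y] :|: [set z; pmate z] by rewrite !inE eqxx.
rewrite Ev !inE in zv yv; rewrite -(eqP yv) in zv.
move: zv; rewrite (at_vertex_quad regF z quad ends) !inE orbA => /orP[zy |].
  by have := disjointFl dis (mem_st z); rewrite /= !inE zy.
by case/orP => /eqP->; rewrite ?st_pmate.
Qed.

Definition step h := g (mate h).

Lemma stepK : cancel step (fun h => mate (g h)).
Proof. by move=> h; rewrite /step gpartK mateK. Qed.

Lemma step_inj : injective step. Proof. exact: can_inj stepK. Qed.

Lemma step_onC h : (step h \in onC) = (h \in onC).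
Proof. by rewrite /step gpart_onC mate_onC. Qed.

Lemma iter_step_onC k h : (iter k step h \in onC) = (h \in onC).
Proof. by elim: k => //= k IH; rewrite step_onC. Qed.

(* [mate] conjugates [step] to its inverse, so the forward orbit of [y] can only
   meet [mate y] at a fixed point of [mate] or of [g]. *)
Lemma mate_neq_iter_step y k : y \in onC -> mate y != iter k step y.
Proof.
suff both n x : x \in onC -> (mate x != iter n step x) && (mate x != iter n.+1 step x).
  by move=> yC; case/andP: (both k y yC).
elim: n x => [|n IH] x xC; first by rewrite /= mate_neq //= /step eq_sym gpart_neq.
case/andP: (IH x xC) => _ -> /=; apply/eqP => E.
have sxC : step x \in onC by rewrite step_onC.
have /andP[/eqP[]] := IH (step x) sxC.
by rewrite -iterSr -[X in mate X]/(g (mate x)) E iterS stepK.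
Qed.

Definition trail x := orbit step x.

Lemma mem_trail x y : (y \in trail x) = fconnect step x y.
Proof. by rewrite -fconnect_orbit. Qed.

Lemma trail_onC x y : x \in onC -> y \in trail x -> y \in onC.
Proof. by rewrite mem_trail => xC /iter_findex <-; rewrite iter_step_onC. Qed.

Lemma mate_notin_trail x y : x \in onC -> y \in trail x -> mate y \notin trail x.
Proof.
move=> xC yx; have yC := trail_onC xC yx; apply/negP; move: yx.
rewrite !mem_trail => xy xmy; have ymy : fconnect step y (mate y).
  by apply: connect_trans xmy; rewrite (fconnect_sym step_inj).
by have := mate_neq_iter_step (findex step y (mate y)) yC; rewrite (iter_findex ymy) eqxx.
Qed.

(* The trail of [mate x] runs through the circuit of [x] backwards: [linked]
   joins the two, and [reps] keeps one trail of each circuit. *)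
Definition linked := [rel a b | (b == mate a) || (b == g a)].

Lemma linked_sym : symmetric linked.
Proof.
by move=> a b /=; rewrite [b == _]eq_sym [b == g a]eq_sym (inv_eq mateK) (inv_eq gpartK).
Qed.

Lemma connect_linked_sym : connect_sym linked. Proof. exact: sym_connect_sym linked_sym. Qed.

Lemma connect_linked_onC x y : connect linked x y -> (x \in onC) = (y \in onC).
Proof.
case/connectP => p + -> {y}; elim: p x => //= y p IH x /andP[/orP[]/eqP-> /IH <-];
by rewrite ?mate_onC ?gpart_onC.
Qed.

Lemma fconnect_step_linked x y : fconnect step x y -> connect linked x y.
Proof.
move/iter_findex <-; elim: (findex step x y) => [|k IH]; first exact: connect0.
rewrite iterS; apply: connect_trans IH (connect_trans (y := mate (iter k step x)) _ _);
by apply: connect1; rewrite /= eqxx ?orbT.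
Qed.

Definition on_trail x := [pred h | (h \in trail x) || (mate h \in trail x)].

Lemma on_trail_closed x : closed linked (on_trail x).
Proof.
apply: (intro_closed connect_linked_sym) => a b /orP[]/eqP-> /orP[]; rewrite !inE ?mateK.
- by move=> ->; rewrite orbT.
- by move=> ->.
- move=> xa; apply/orP; right; move: xa; rewrite !mem_trail => /connect_trans; apply.
  by rewrite (fconnect_sym step_inj); apply: connect1; rewrite /= /step mateK gpartK.
- move=> xa; apply/orP; left; move: xa; rewrite !mem_trail => /connect_trans; apply.
  by apply: connect1; rewrite /= /step mateK.
Qed.

Lemma on_trail_connect x h : h \in on_trail x -> connect linked x h.
Proof.
case/orP; rewrite mem_trail => /fconnect_step_linked // xmh.
by apply: connect_trans xmh (connect1 _); rewrite /= mateK eqxx.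
Qed.

Lemma on_trail_onC x h : x \in onC -> h \in on_trail x -> h \in onC.
Proof. by move=> xC /orP[] /(trail_onC xC); rewrite ?mate_onC. Qed.

Definition reps := [seq x <- enum H | (x \in onC) && (root linked x == x)].

Lemma mem_reps x : (x \in reps) = (x \in onC) && (root linked x == x).
Proof. by rewrite mem_filter mem_enum andbT. Qed.

Lemma reps_uniq : uniq reps. Proof. exact: filter_uniq (enum_uniq _). Qed.

Lemma reps_onC x : x \in reps -> x \in onC. Proof. by rewrite mem_reps => /andP[]. Qed.

Lemma reps_eq x x' y : x \in reps -> x' \in reps ->
  connect linked x y -> connect linked x' y -> x = x'.
Proof.
rewrite !mem_reps => /andP[_ /eqP rx] /andP[_ /eqP rx'].
move=> /(rootP connect_linked_sym) e1 /(rootP connect_linked_sym) e2.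
by rewrite -rx -rx' e1 e2.
Qed.

Lemma on_trail_rep h : h \in onC -> exists2 x, x \in reps & h \in on_trail x.
Proof.
move=> hC; exists (root linked h).
  rewrite mem_reps (root_root connect_linked_sym) eqxx andbT.
  by rewrite -(connect_linked_onC (connect_root _ h)).
rewrite -(closed_connect (on_trail_closed _) (_ : connect linked (root linked h) h)).
  by rewrite inE mem_trail connect0.
by rewrite connect_linked_sym connect_root.
Qed.

Definition rerouted_circuit x := [seq (y, mate y) | y <- trail x].

Lemma mem_rerouted_circuit x h :
  (h \in walk_halves (rerouted_circuit x)) = (h \in on_trail x).
Proof.
rewrite mem_walk_halves has_map; apply/hasP/orP => [[y yx /orP[]/eqP->] | [hx | mhx]].
- by left.
- by right; rewrite /= mateK.
- by exists h; rewrite //= /inpair eqxx.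
- by exists (mate h); rewrite //= /inpair mateK eqxx orbT.
Qed.

Lemma rerouted_circuit_oriented x : x \in onC -> oriented_circuit (rerouted_circuit x).
Proof.
move=> xC; apply/and3P; split.
- rewrite closed_walkE all_map cycle_map; apply/andP; split.
    2: exact: cycle_orbit step_inj x.
  apply/allP => y /(trail_onC xC) yC /=.
  by rewrite /dir_single_transition /= eq_sym mate_neq // mate_end eqxx.
- by rewrite /rerouted_circuit /trail /orbit -orderSpred.
- rewrite /walk_halves -map_comp.
  apply: (uniq_flatten_pairs (a := id) (b := mate)); first exact: orbit_uniq.
    by move=> y /(trail_onC xC) yC; rewrite eq_sym mate_neq.
  move=> y z yx zx /or4P[]/eqP //= E.
  + by move: (mate_notin_trail xC zx); rewrite -E yx.
  + by move: (mate_notin_trail xC yx); rewrite E zx.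
  + exact: mate_inj.
Qed.

Lemma rerouted_circuit_disjoint x x' : x \in reps -> x' \in reps -> x != x' ->
  [disjoint walk_edges (rerouted_circuit x) & walk_edges (rerouted_circuit x')].
Proof.
move=> xR x'R; apply: contraNT; rewrite -setI_eq0 => /set0Pn[E /setIP[]].
case/imsetP => a + -> /imsetP[b + Eab]; rewrite !mem_rerouted_circuit => ha hb.
have : b \in [set a; g a] by rewrite Eab !inE eqxx.
have ga : g a \in on_trail x.
  by rewrite -(on_trail_closed x (_ : linked a (g a))) //= eqxx orbT.
rewrite !inE => /orP[]/eqP Eb; apply/eqP/(reps_eq xR x'R _ (on_trail_connect hb));
by apply: on_trail_connect; rewrite Eb.
Qed.

Definition rerouted_cycle := map rerouted_circuit reps.

Lemma rerouted_cycle_halves h :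
  (h \in walk_halves (flatten rerouted_cycle)) = (h \in onC).
Proof.
rewrite mem_walk_halves_flatten has_map; apply/hasP/idP => [[x xR] /=|hC].
  by rewrite mem_rerouted_circuit; apply: on_trail_onC (reps_onC xR).
by have [x xR hx] := on_trail_rep hC; exists x; rewrite //= mem_rerouted_circuit.
Qed.

Lemma rerouted_cycle_edges : cycle_edges rerouted_cycle = cycle_edges C.
Proof.
apply/setP => E; apply/mem_cycle_edges/mem_cycle_edges => -[h hh ->]; exists h => //.
  by rewrite rerouted_cycle_halves inE in hh.
by rewrite rerouted_cycle_halves inE.
Qed.

Lemma rerouted_cycle_oriented : oriented_cycle rerouted_cycle.
Proof.
rewrite /oriented_cycle all_map pairwise_map; apply/andP; split.
  by apply/allP => x /reps_onC; apply: rerouted_circuit_oriented.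
by apply: pairwise_uniq_in reps_uniq _ => x x' xR x'R; apply: rerouted_circuit_disjoint.
Qed.

Definition crossings x := filter crossing (trail x).

Definition tch_steps x : seq (TH P * TH P) :=
  [seq (st y, st (mate y)) | y <- crossings x].

Lemma crossings_onC x y : x \in onC -> y \in crossings x -> (y \in onC) && crossing y.
Proof. by move=> xC; rewrite mem_filter => /andP[-> /(trail_onC xC) ->]. Qed.

Lemma st_neq_mate y : y \in onC -> (st y != st (mate y)) = crossing y.
Proof. by move=> yC; rewrite eq_sym st_mate ?negbK. Qed.

Lemma pi_pairs_rerouted x : x \in onC -> pi_pairs P (rerouted_circuit x) = tch_steps x.
Proof.
move=> xC; have: all (mem onC) (trail x) by apply/allP => y /(trail_onC xC).
rewrite /tch_steps /crossings /rerouted_circuit /pi_pairs.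
elim: (trail x) => //= y l IH /andP[yC lC].
by rewrite !st_of_st st_neq_mate //; case: (crossing y); rewrite /= IH.
Qed.

Lemma crossings_at_vertex x x' y z : x \in reps -> x' \in reps ->
  y \in crossings x -> z \in crossings x' -> gend z = gend y -> x = x' /\ z = y.
Proof.
move=> xR x'R yx zx' ez; have xC := reps_onC xR; have x'C := reps_onC x'R.
case/andP: (crossings_onC xC yx) => yC cy; case/andP: (crossings_onC x'C zx') => zC _.
move: yx zx'; rewrite !mem_filter => /andP[_ yx] /andP[_ zx'].
have := crossing_at_vertex yC cy zC ez; rewrite -(mate_crossing yC cy) => Ez.
have zx : z \in on_trail x by case: Ez => ->; rewrite inE ?mateK yx ?orbT.
have zx'' : z \in on_trail x' by rewrite inE zx'.
have xx' := reps_eq xR x'R (on_trail_connect zx) (on_trail_connect zx'').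
split=> //; case: Ez => // Ez.
by move: (mate_notin_trail xC yx); rewrite -Ez xx' zx'.
Qed.

Lemma st_end y z : st y = st z -> gend z = gend y.
Proof. by move/eqP; rewrite eq_sym st_eqE !inE => /orP[]/eqP->; rewrite ?pmate_end. Qed.

Lemma tch_halves_rerouted x s : x \in onC ->
  s \in @walk_halves (Tch P) (Defs.piP P (rerouted_circuit x)) ->
  exists2 y, y \in crossings x & (s == st y) || (s == st (mate y)).
Proof.
move=> xC; rewrite [Defs.piP _ _]/(link_pairs _) walk_halves_link_pairs mem_rot.
rewrite pi_pairs_rerouted // /walk_halves -map_comp.
by case/flattenP => _ /mapP[y yx ->]; rewrite !inE; exists y.
Qed.

Lemma tch_circuit_rerouted x : x \in reps -> Defs.piP P (rerouted_circuit x) != [::] ->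
  @oriented_circuit (Tch P) (Defs.piP P (rerouted_circuit x)).
Proof.
move=> xR; have xC := reps_onC xR.
rewrite [Defs.piP _ _]/(link_pairs _) pi_pairs_rerouted // => ne.
apply: oriented_circuit_link_pairs.
- by apply: contraNneq ne => ->.
- rewrite /walk_halves -map_comp.
  apply: (uniq_flatten_pairs (a := st) (b := fun y => st (mate y))).
  + exact: filter_uniq (orbit_uniq _ _).
  + by move=> y /(crossings_onC xC)/andP[yC cy]; rewrite st_neq_mate.
  + move=> y z yx zx meet.
    have ezy : gend z = gend y by case/or4P: meet => /eqP/st_end; rewrite ?mate_end.
    by have [] := crossings_at_vertex xR xR yx zx ezy.
- rewrite all_map; apply/allP => y /(crossings_onC xC)/andP[yC cy].
  by rewrite /= tch_part_crossing.
(* Between two crossings the trail only follows transitions of P and edges of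
   F, so it stays on one circuit of P. *)
rewrite cycle_map; apply: (cycle_filter_transparent (inn := fun h => tch_end (st h))
                                                   (out := fun h => tch_end (st (mate h)))).
  apply: sub_cycle (cycle_orbit step_inj x) => a b /eqP <-.
  by rewrite /= /step tch_end_st_gpart.
apply/allP => a /(trail_onC xC) aC; apply/orP.
have [|nca] := boolP (crossing a); first by left.
by right; rewrite mate_pmate ?st_pmate.
Qed.

Lemma tch_disjoint_rerouted x x' : x \in reps -> x' \in reps -> x != x' ->
  [disjoint @walk_edges (Tch P) (Defs.piP P (rerouted_circuit x))
          & @walk_edges (Tch P) (Defs.piP P (rerouted_circuit x'))].
Proof.
move=> xR x'R; apply: contraNT; rewrite -setI_eq0 => /set0Pn[E /setIP[]].
case/imsetP => a + -> /imsetP[b + Eab].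
move=> /(tch_halves_rerouted (reps_onC xR))[y yx ay].
move=> /(tch_halves_rerouted (reps_onC x'R))[z zx' bz].
case/andP: (crossings_onC (reps_onC xR) yx) => yC cy.
have by' : (b == st y) || (b == st (mate y)).
  have : b \in [set a; tch_part a] by rewrite Eab !inE eqxx.
  case/orP: ay => /eqP->; rewrite !inE tch_part_crossing ?mateK ?mate_onC ?crossing_mate //.
  by rewrite orbC.
have ezy : gend z = gend y.
  by case/orP: by' bz => /eqP-> /orP[]/eqP/st_end; rewrite ?mate_end.
by have [-> _] := crossings_at_vertex xR x'R yx zx' ezy.
Qed.

Lemma tch_cycle_rerouted : @oriented_cycle (Tch P) (piP_cycle P rerouted_cycle).
Proof.
apply/andP; split.
  apply/allP => Q /mapP[W]; rewrite mem_filter => /andP[ne /mapP[x xR EW]] ->.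
  by rewrite EW in ne *; apply: tch_circuit_rerouted.
rewrite pairwise_map; apply: pairwise_filter; rewrite /rerouted_cycle pairwise_map.
by apply: pairwise_uniq_in reps_uniq _ => x x' xR x'R; apply: tch_disjoint_rerouted.
Qed.

End Transitions.

Theorem mainTheorem11 (F : graph) (P : seq (seq (gH F * gH F))) :
  wf_graph F -> four_regular F -> circuit_partition P ->
  forall C : seq (seq (gH F * gH F)), oriented_cycle C ->
  exists C' : seq (seq (gH F * gH F)),
    [/\ oriented_cycle C', cycle_edges C' = cycle_edges C &
        @oriented_cycle (Tch P) (piP_cycle P C')].
Proof.
move=> wfF regF cpP C cycC; exists (rerouted_cycle P C).
split; first exact: rerouted_cycle_oriented.
  exact: rerouted_cycle_edges.
exact: tch_cycle_rerouted.
Qed.
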